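(* Let $K_0,\dots,K_n$ be concave kernel functions such that for every $\mathbf{x}\in\mathbb{T}^n$ and $z\in\mathbb{T}$ with $F(\mathbf{x},z)=\overline{m}(\mathbf{x})$ one has $z\ne x_j$ for all $j=0,\dots,n$. For each $j$ let $(K_j^{(k)})_{k\in\mathbb{N}}$ be a sequence of concave kernel functions converging to $K_j$ locally uniformly on $(0,2\pi)$ (i.e. uniformly on every compact subset of $(0,2\pi)$). Then $\overline{m}^{(k)}(\mathbf{x})\to\overline{m}(\mathbf{x})$ uniformly on $\mathbb{T}^n$ as $k\to\infty$.
   Context: Identify the torus $\mathbb{T}=\mathbb{R}/2\pi\mathbb{Z}$ with $[0,2\pi)$. A concave kernel function is a $2\pi$-periodic function $K:\mathbb{R}\to[-\infty,\infty)$ which is real-valued and concave on $(0,2\pi)$ with $\lim_{t\downarrow0}K(t)=\lim_{t\uparrow2\pi}K(t)$ existing in $[-\infty,\infty)$ (this common value being $K(0)$). For $\mathbf{x}=(x_1,\dots,x_n)\in\mathbb{T}^n$ put $x_0=0$, $F(\mathbf{x},t)=K_0(t)+\sum_{j=1}^nK_j(t-x_j)$ and $\overline{m}(\mathbf{x})=\sup_{t\in\mathbb{T}}F(\mathbf{x},t)$; $F^{(k)}$ and $\overline{m}^{(k)}$ are defined in the same way from the kernels $K_0^{(k)},\dots,K_n^{(k)}$. *)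

From HB Require Import structures.
From mathcomp Require Import all_boot all_order all_algebra.
From mathcomp Require Import all_classical all_reals all_analysis.
Set Implicit Arguments. Unset Strict Implicit. Unset Printing Implicit Defensive.
Import Order.TTheory GRing.Theory Num.Theory.
Import numFieldNormedType.Exports.
Local Open Scope classical_set_scope.
Local Open Scope ring_scope.

(* The torus T = R / 2piZ is identified with [0, 2pi).
   A kernel is a function R -> [-oo, +oo) (values in \bar R, never +oo). *)

Definition concave_kernel (R : realType) (K : R -> \bar R) : Prop :=
  (forall t : R, K (t + 2 * pi) = K t) /\
  (forall t : R, 0 < t < 2 * pi -> K t \is a fin_num) /\
  (forall s t l : R, 0 < s < 2 * pi -> 0 < t < 2 * pi -> 0 <= l <= 1 ->
     l * fine (K s) + (1 - l) * fine (K t) <= fine (K (l * s + (1 - l) * t))) /\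
  K 0 != +oo%E /\
  (K t @[t --> (0:R)^'+] --> K 0) /\
  (K t @[t --> (2 * pi : R)^'-] --> K 0).

(* F(x, t) = K_0(t) + sum_{j=1}^n K_j(t - x_j); the kernels K_0..K_n are
   indexed by 'I_n.+1 (K ord0 = K_0, K (lift ord0 j) = K_{j+1}),
   the points x_1..x_n by 'I_n. *)
Definition Fsum (R : realType) (n : nat) (K : 'I_n.+1 -> R -> \bar R)
    (x : 'I_n -> R) (t : R) : \bar R :=
  (K ord0 t + \sum_(j < n) K (lift ord0 j) (t - x j)%R)%E.

Definition mbar (R : realType) (n : nat) (K : 'I_n.+1 -> R -> \bar R)
    (x : 'I_n -> R) : \bar R :=
  ereal_sup [set Fsum K x t | t in `[0, 2 * pi[%classic].

Definition in_torus_n (R : realType) (n : nat) (x : 'I_n -> R) : Prop :=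
  forall j, 0 <= x j < 2 * pi.

(* Every concave kernel attains its minimum at 0 and, by extrapolating chords, is
   bounded above in terms of three of its interior values.  Fix eta > 0.
   Upper bound: away from 2piZ the K_j^(k) converge uniformly, while near 2piZ chord
   extrapolation from two interior points bounds K_j^(k) by K_j(0) + 3 eta, hence by
   K_j + 3 eta; if K_j(0) = -oo the same extrapolation makes F^(k) too small there
   to matter.  Lower bound: for an almost maximizing t of F(x, .), a pigeonhole
   argument gives an arbitrarily small shift h keeping every t + h - x_j a fixed
   distance away from 2piZ; concavity yields F(x, t + h) >= F(x, t) - (n + 1) eta,
   and at t + h the kernels converge uniformly. *)

From HB Require Import structures.
From mathcomp Require Import all_boot all_order all_algebra.
From mathcomp Require Import all_classical all_reals all_analysis.
From mathcomp Require Import ring lra.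
Set Implicit Arguments.
Unset Strict Implicit.
Unset Printing Implicit Defensive.
Import Order.TTheory GRing.Theory Num.Theory.
Import numFieldNormedType.Exports.
Local Open Scope classical_set_scope.
Local Open Scope ring_scope.

Local Notation twopi := (2 * pi).

Lemma twopi_gt0 (R : realType) : 0 < twopi :> R.
Proof. by rewrite mulr_gt0 ?pi_gt0. Qed.

Section Wrap.
Variable R : realType.
Implicit Types d u v w : R.

Definition wrap u : R := u - (Num.floor (u / twopi))%:~R * twopi.

Lemma wrap_itv u : 0 <= wrap u < twopi.
Proof.
have tp0 := twopi_gt0 R.
rewrite /wrap subr_ge0 ltrBlDl; apply/andP; split.
  by rewrite -ler_pdivlMr // floor_le.
have : u / twopi < (Num.floor (u / twopi) + 1)%:~R by rewrite -floor_lt_int ltzD1.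
by rewrite intrD ltr_pdivrMr // mulrDl mul1r addrC.
Qed.

Lemma wrap_id u : 0 <= u < twopi -> wrap u = u.
Proof.
move=> /andP[u0 ut]; have tp0 := twopi_gt0 R.
have u01 : 0 <= u / twopi < 1.
  by apply/andP; split; [apply: divr_ge0; lra|rewrite ltr_pdivrMr // mul1r].
by rewrite /wrap (@floor_def _ _ 0) ?mul0r ?subr0.
Qed.

Definition near_zero d u : bool := (wrap u < d) || (twopi - d < wrap u).

Lemma near_zeroW d d' u : d <= d' -> near_zero d u -> near_zero d' u.
Proof. by move=> dd' /orP[] ?; apply/orP; [left|right]; lra. Qed.

Lemma not_near_zero d u : ~~ near_zero d u -> d <= wrap u <= twopi - d.
Proof. by rewrite negb_or -!leNgt => /andP[-> ->]. Qed.

Lemma near_zeroP d u : near_zero d u -> exists z : int, `|u - z%:~R * twopi| < d.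
Proof.
have := wrap_itv u; rewrite /near_zero /wrap; set z := Num.floor _.
move=> /andP[w0 wt] /orP[wd|dw]; first by exists z; rewrite ger0_norm.
by exists (z + 1); rewrite intrD mulrDl mul1r ltr0_norm; lra.
Qed.

Lemma near_zero_sep d v w : 2 * d <= w - v <= twopi - 2 * d ->
  near_zero d v -> near_zero d w -> False.
Proof.
move=> /andP[lo hi] /near_zeroP[z hz] /near_zeroP[z' hz'].
move: hz hz'; rewrite !ltr_norml => /andP[? ?] /andP[? ?].
have tp0 := twopi_gt0 R.
have [zz|zz] := lerP (z' - z) 0.
  have : (z' - z)%:~R * twopi <= 0 :> R by rewrite pmulr_lle0 // lerz0.
  rewrite intrB mulrBl; lra.
have : twopi <= (z' - z)%:~R * twopi :> R by rewrite ler_pMl // ler1z.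
rewrite intrB mulrBl; lra.
Qed.

Lemma shift_avoids_near_zero m (y : 'I_m -> R) t d : 0 <= d ->
  2 * m.+1%:R * d <= twopi ->
  exists i : 'I_m.+1, forall j, ~~ near_zero d (t + 2 * i%:R * d - y j).
Proof.
move=> d0 hm.
have [[i hi]|] :=
  pselect (exists i : 'I_m.+1, forall j, ~~ near_zero d (t + 2 * i%:R * d - y j)).
  by exists i.
move=> /forallNP all_near.
have /choice[f hf] : forall i : 'I_m.+1, exists j, near_zero d (t + 2 * i%:R * d - y j).
  by move=> i; have /existsNP[j /negP/negbNE] := all_near i; exists j.
suff /leq_card : injective f by rewrite !card_ord ltnn.
move=> i i'; wlog ii' : i i' / (i <= i')%N.
  move=> W fii'; case/orP: (leq_total i i') => h; first exact: W.
  exact/esym/(W _ _ h)/esym.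
move: ii'; rewrite leq_eqVlt => /orP[/eqP/val_inj //|lt fii'].
exfalso; move: (hf i) (hf i'); rewrite fii'; apply: near_zero_sep.
have : (i%:R + 1 <= i'%:R :> R) by rewrite natr1 ler_nat.
have : (i'%:R <= m%:R :> R) by rewrite ler_nat -ltnS ltn_ord.
have : (0 <= i%:R :> R) by rewrite ler0n.
rewrite -natr1 in hm; nra.
Qed.

End Wrap.

(* Chord extrapolation over [2pi/4, 2pi/2] and [2pi/2, 3 2pi/4] bounds a concave
   kernel above on the whole circle. *)
Definition kernel_bound (R : realType) (L : R -> \bar R) : R :=
  fine (L (twopi / 2)) + 2 * `|fine (L (twopi / 2)) - fine (L (3 * twopi / 4))|
  + 2 * `|fine (L (twopi / 2)) - fine (L (twopi / 4))|.

Section ConcaveKernel.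
Variables (R : realType) (K : R -> \bar R).
Hypothesis hK : concave_kernel K.
Implicit Types a b c h p q s t u v w : R.

Lemma kernel_periodicz (z : int) t : K (t + z%:~R * twopi) = K t.
Proof.
have [Kper _] := hK.
elim/int_rec: z t => [|m IH|m IH] t; first by rewrite mul0r addr0.
- by rewrite intS rmorphD /= mulrDl mul1r addrA IH Kper.
- by rewrite intS opprD rmorphD /= mulrDl mulN1r addrA IH -(Kper (t - twopi)) subrK.
Qed.

Lemma kernel_wrapD u h : K (wrap u + h) = K (u + h).
Proof. by rewrite /wrap addrAC -mulNr -rmorphN kernel_periodicz. Qed.

Lemma kernel_wrap u : K (wrap u) = K u.
Proof. by have := kernel_wrapD u 0; rewrite !addr0. Qed.

Lemma kernel_finE t : 0 < t < twopi -> K t = (fine (K t))%:E.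
Proof. by case: hK => _ [Kfin _] /Kfin/fineK. Qed.

Lemma kernel_chord u s v : 0 < u < twopi -> 0 < v < twopi -> u <= s <= v ->
  (v - s) * fine (K u) + (s - u) * fine (K v) <= (v - u) * fine (K s).
Proof.
move=> hu hv /andP[us sv].
have [uv|vu] := ltP u v; last first.
  have es : s = u by lra.
  have ev : v = u by lra.
  by rewrite es ev !subrr !mul0r addr0.
have vu0 : 0 < v - u by rewrite subr_gt0.
set l := (v - s) / (v - u).
have l01 : 0 <= l <= 1.
  apply/andP; split; first by apply: divr_ge0; lra.
  by rewrite /l ler_pdivrMr // mul1r; lra.
have [_ [_ [Kconc _]]] := hK.
have := Kconc u v l hu hv l01.
have -> : l * u + (1 - l) * v = s by rewrite /l; field; rewrite gt_eqF.
have -> : v - s = l * (v - u) by rewrite /l mulrVK // unitfE gt_eqF.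
have -> : s - u = (1 - l) * (v - u) by rewrite /l; field; rewrite gt_eqF.
rewrite -(ler_pM2l vu0); lra.
Qed.

Lemma kernel_extrapolate s a b c x y : 0 < s < twopi -> 0 < b < twopi ->
  (s < a < b) || (b < a < s) -> 0 <= c -> `|a - s| <= c * `|b - a| ->
  fine (K a) <= x -> y <= fine (K b) ->
  fine (K s) <= x + c * Num.max 0 (x - y).
Proof.
move=> hs hb hab c0 hc Kax Kby.
have slope : `|b - a| * (fine (K s) - fine (K a)) <=
             `|a - s| * (fine (K a) - fine (K b)).
  case/orP: hab => /andP[? ?].
  - have := @kernel_chord s a b hs hb.
    rewrite !gtr0_norm ?subr_gt0 // => /(_ ltac:(apply/andP; split; lra)); lra.
  - have := @kernel_chord b a s hb hs.
    rewrite !ltr0_norm ?subr_lt0 // => /(_ ltac:(apply/andP; split; lra)); lra.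
have ba0 : 0 < `|b - a|.
  by rewrite normr_gt0 subr_eq0; case/orP: hab => /andP[? ?]; [rewrite gt_eqF|rewrite lt_eqF].
set m := Num.max 0 _.
have m0 : 0 <= m by rewrite le_max lexx.
have mD : x - y <= m by rewrite le_max lexx orbT.
have h0 : `|b - a| * (fine (K s) - x) <= `|b - a| * (fine (K s) - fine (K a)).
  by rewrite ler_wpM2l //; lra.
have h1 : `|a - s| * (fine (K a) - fine (K b)) <= `|a - s| * m by rewrite ler_wpM2l //; lra.
have h2 : `|a - s| * m <= c * `|b - a| * m by rewrite ler_wpM2r.
have : `|b - a| * (fine (K s) - x - c * m) <= 0 by lra.
rewrite pmulr_rle0 //; lra.
Qed.

Lemma kernel_min_between p s q : 0 < p -> p <= s <= q -> q < twopi ->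
  Num.min (fine (K p)) (fine (K q)) <= fine (K s).
Proof.
move=> p0 /andP[ps sq] qt.
have [pq|qp] := ltP p q; last by rewrite (_ : s = p); [rewrite ge_min lexx|lra].
have hp : 0 < p < twopi by apply/andP; split; lra.
have hq : 0 < q < twopi by apply/andP; split; lra.
have := @kernel_chord p s q hp hq; rewrite ps sq => /(_ isT) chord.
set m := Num.min _ _.
have h1 : (q - s) * m <= (q - s) * fine (K p) by rewrite ler_wpM2l ?subr_ge0 ?ge_min ?lexx.
have h2 : (s - p) * m <= (s - p) * fine (K q).
  by rewrite ler_wpM2l ?subr_ge0 // ge_min lexx orbT.
have : 0 <= (q - p) * (fine (K s) - m) by lra.
rewrite pmulr_rge0 ?subr_gt0 //; lra.
Qed.

Lemma kernel0_le s : (K 0 <= K s)%E.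
Proof.
rewrite -(kernel_wrap s); have /andP[] := wrap_itv s; move: (wrap s) => w w0 wt.
have [->|wn0] := eqVneq w 0; first exact: lexx.
have hw : 0 < w < twopi by rewrite lt_neqAle eq_sym wn0 w0.
rewrite (kernel_finE hw) leNgt; apply/negP => Kw_lt.
have [_ [_ [_ [_ [K0r K2pil]]]]] := hK.
have Kgt : nbhs (K 0) [set y | ((fine (K w))%:E < y)%E].
  by apply: open_nbhs_nbhs; split => //; exact: open_ereal_gt_ereal.
near (0 : R)^'+ => u; near (twopi : R)^'- => v.
have Ku : ((fine (K w))%:E < K u)%E by near: u; exact: K0r _ Kgt.
have Kv : ((fine (K w))%:E < K v)%E by near: v; exact: K2pil _ Kgt.
have hu : 0 < u < w.
  by apply/andP; split; near: u; [exact: nbhs_right_gt|apply: nbhs_right_lt; lra].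
have hv : w < v < twopi.
  by apply/andP; split; near: v; [apply: nbhs_left_gt; lra|exact: nbhs_left_lt].
have hu' : 0 < u < twopi by apply/andP; split; lra.
have hv' : 0 < v < twopi by apply/andP; split; lra.
rewrite (kernel_finE hu') lte_fin in Ku; rewrite (kernel_finE hv') lte_fin in Kv.
have p1 : (v - w) * fine (K w) < (v - w) * fine (K u) by rewrite ltr_pM2l // subr_gt0; lra.
have p2 : (w - u) * fine (K w) < (w - u) * fine (K v) by rewrite ltr_pM2l // subr_gt0; lra.
have := @kernel_chord u w v hu' hv' ltac:(apply/andP; split; lra); lra.
Unshelve. all: by end_near.
Qed.

Lemma kernel_near_zero_lt c : (K 0 < c%:E)%E ->
  \forall d \near 0^'+, forall s, near_zero d s -> (K s < c%:E)%E.
Proof.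
move=> K0c; have [_ [_ [_ [_ [K0r K2pil]]]]] := hK.
have Klt : nbhs (K 0) [set y | (y < c%:E)%E].
  by apply: open_nbhs_nbhs; split => //; exact: open_ereal_lt_ereal.
have [e1 /= e10 near0] := K0r _ Klt.
have [e2 /= e20 near2pi] := K2pil _ Klt.
near=> d => s; rewrite -(kernel_wrap s) /near_zero.
have /andP[] := wrap_itv s; move: (wrap s) => w w0 wt.
have [->//|wn0] := eqVneq w 0.
have {wn0} w0 : 0 < w by rewrite lt_neqAle eq_sym wn0.
have d1 : d < e1 by near: d; exact: nbhs_right_lt.
have d2 : d < e2 by near: d; exact: nbhs_right_lt.
case/orP => wd.
- by apply: near0 => //; rewrite /ball_ /= sub0r normrN gtr0_norm //; lra.
- by apply: near2pi => //; rewrite /ball_ /= gtr0_norm ?subr_gt0 //; lra.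
Unshelve. all: by end_near.
Qed.

Lemma kernel_le_bound s : (K s <= (kernel_bound K)%:E)%E.
Proof.
have tp0 := twopi_gt0 R.
have mid : 0 < (twopi / 2 : R) < twopi by apply/andP; split; lra.
have max0_le (x : R) : Num.max 0 x <= `|x| by rewrite ge_max normr_ge0 ler_norm.
suff Kint_le w : 0 < w < twopi -> fine (K w) <= kernel_bound K.
  rewrite -(kernel_wrap s); have /andP[] := wrap_itv s; move: (wrap s) => w w0 wt.
  have [->|wn0] := eqVneq w 0.
    apply: le_trans (kernel0_le (twopi / 2)) _.
    by rewrite (kernel_finE mid) lee_fin Kint_le.
  have hw : 0 < w < twopi by rewrite lt_neqAle eq_sym wn0 w0.
  by rewrite (kernel_finE hw) lee_fin Kint_le.
move=> hw; rewrite /kernel_bound.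
set A := fine (K (twopi / 2)) - fine (K (3 * twopi / 4)).
set B := fine (K (twopi / 2)) - fine (K (twopi / 4)).
have := max0_le A; have := max0_le B; have := normr_ge0 A; have := normr_ge0 B.
have [wl|wg] := ltP w (twopi / 2).
  have hb : 0 < (3 * twopi / 4 : R) < twopi by apply/andP; split; lra.
  have hab : (w < (twopi / 2 : R) < 3 * twopi / 4) || ((3 * twopi / 4 : R) < twopi / 2 < w).
    by apply/orP; left; apply/andP; split; lra.
  have dist : `|twopi / 2 - w| <= 2 * `|3 * twopi / 4 - twopi / 2|.
    by rewrite !gtr0_norm; lra.
  by have := kernel_extrapolate hw hb hab (ler0n _ 2) dist (lexx _) (lexx _); lra.
have [->|wn] := eqVneq w (twopi / 2); first lra.
have wg' : twopi / 2 < w by rewrite lt_neqAle eq_sym wn wg.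
have hb : 0 < (twopi / 4 : R) < twopi by apply/andP; split; lra.
have hab : (w < (twopi / 2 : R) < twopi / 4) || ((twopi / 4 : R) < twopi / 2 < w).
  by apply/orP; right; apply/andP; split; lra.
have dist : `|twopi / 2 - w| <= 2 * `|twopi / 4 - twopi / 2|.
  by rewrite !ltr0_norm; lra.
by have := kernel_extrapolate hw hb hab (ler0n _ 2) dist (lexx _) (lexx _); lra.
Qed.

Lemma kernel_bound_close (L : R -> \bar R) :
  (forall t, twopi / 4 <= t <= 3 * twopi / 4 -> `|fine (L t) - fine (K t)| < 1 / 9) ->
  kernel_bound L <= kernel_bound K + 1.
Proof.
move=> close; have tp0 := twopi_gt0 R.
have c1 := close (twopi / 4) ltac:(apply/andP; split; lra).
have c2 := close (twopi / 2) ltac:(apply/andP; split; lra).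
have c3 := close (3 * twopi / 4) ltac:(apply/andP; split; lra).
move: c1 c2 c3; rewrite /kernel_bound !ltr_norml.
set L1 := fine (L _); set L2 := fine (L _); set L3 := fine (L _).
set K1 := fine (K _); set K2 := fine (K _); set K3 := fine (K _).
move=> /andP[? ?] /andP[? ?] /andP[? ?].
have := lerB_dist (L2 - L3) (K2 - K3); have := lerB_dist (L2 - L1) (K2 - K1).
have : `|L2 - L3 - (K2 - K3)| <= 2 / 9 by rewrite ler_norml; apply/andP; split; lra.
have : `|L2 - L1 - (K2 - K1)| <= 2 / 9 by rewrite ler_norml; apply/andP; split; lra.
lra.
Qed.

Lemma kernel_shift_le d eta : 0 < d -> 0 < eta ->
  \forall m \near 0^'+, forall s h, ~~ near_zero d s -> 0 <= h <= m ->
    (K s <= K (s + h) + eta%:E)%E.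
Proof.
move=> d0 eta0; have tp0 := twopi_gt0 R.
set q := twopi - d / 4.
set D := `|kernel_bound K| + `|fine (K q)|.
have D0 : 0 <= D by rewrite addr_ge0.
near=> m => s h far /andP[h0 hm].
have m_d : m <= d / 2 by near: m; apply: nbhs_right_ltW; rewrite divr_gt0.
have m_D : m * D <= eta * d / 2.
  have : m < eta * d / (2 * (D + 1)).
    by near: m; apply: nbhs_right_lt; rewrite divr_gt0 ?mulr_gt0 //; lra.
  rewrite ltr_pdivlMr; last lra.
  have : m * D <= m * (D + 1) by rewrite ler_wpM2l; lra.
  lra.
rewrite -(kernel_wrap s) -(kernel_wrapD s h).
have /not_near_zero := far; move: (wrap s) => w /andP[dw wd].
have hw : 0 < w < twopi by apply/andP; split; lra.
have hwh : 0 < w + h < twopi by apply/andP; split; lra.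
have hq : 0 < q < twopi by apply/andP; split; rewrite /q; lra.
have hwq : w <= w + h <= q by apply/andP; split; rewrite /q; lra.
rewrite (kernel_finE hw) (kernel_finE hwh) -EFinD lee_fin.
have chord := kernel_chord hw hq hwq.
have Kw_le : fine (K w) <= `|kernel_bound K|.
  have := kernel_le_bound w; rewrite (kernel_finE hw) lee_fin.
  by have := ler_norm (kernel_bound K); lra.
have Kq_ge : - `|fine (K q)| <= fine (K q).
  by have := ler_norm (- fine (K q)); rewrite normrN; lra.
have p1 : h * (fine (K w) - fine (K q)) <= h * D by rewrite ler_wpM2l // /D; lra.
have p2 : h * D <= m * D by rewrite ler_wpM2r.
have p3 : d / 2 * eta <= (q - w) * eta.
  by apply: ler_wpM2r; [exact: ltW|rewrite /q; lra].
have : (q - w) * (fine (K w) - fine (K (w + h)) - eta) <= 0 by lra.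
by rewrite pmulr_rle0 ?subr_gt0; [lra|rewrite /q; lra].
Unshelve. all: by end_near.
Qed.

End ConcaveKernel.

Section KernelSequence.
Variables (R : realType) (K : R -> \bar R) (Ks : nat -> R -> \bar R).
Hypotheses (hK : concave_kernel K) (hKs : forall k, concave_kernel (Ks k)).
Hypothesis Ks_cvg : forall a b : R, 0 < a -> b < twopi -> forall e : R, 0 < e ->
  \forall k \near \oo, forall t, a <= t <= b -> `|fine (Ks k t) - fine (K t)| < e.

Lemma kernel_seq_near_zero_le c eta : (K 0 < c%:E)%E -> 0 < eta ->
  \forall a \near 0^'+, \forall k \near \oo,
    forall s, near_zero a s -> (Ks k s <= (c + 2 * eta)%:E)%E.
Proof.
move=> K0c eta0; have tp0 := twopi_gt0 R.
have mid : 0 < (twopi / 2 : R) < twopi by apply/andP; split; lra.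
near (0 : R)^'+ => d.
have Kd : forall s, near_zero d s -> (K s < c%:E)%E.
  by near: d; exact: kernel_near_zero_lt.
have d0 : 0 < d by near: d; exact: nbhs_right_gt.
set D := `|c - fine (K (twopi / 2))| + 2 * eta.
have D_ge : c + eta - (fine (K (twopi / 2)) - eta) <= D.
  by have := ler_norm (c - fine (K (twopi / 2))); rewrite /D; lra.
have D0 : 0 <= D by have := normr_ge0 (c - fine (K (twopi / 2))); rewrite /D; lra.
set e := eta / (D + 1).
have e0 : 0 < e by rewrite divr_gt0 //; lra.
have eD : e * D <= eta.
  have : e * (D + 1) = eta by rewrite /e mulrVK // unitfE; apply/eqP; lra.
  lra.
set a0 := Num.min (d / 2) (Num.min (twopi / 4) (twopi / 4 * e)).
have a0_pos : 0 < a0 by rewrite !lt_min !divr_gt0 //= mulr_gt0 // divr_gt0.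
have a0_d : a0 <= d / 2 by rewrite ge_min lexx.
have a0_q : a0 <= twopi / 4 by rewrite !ge_min lexx orbT.
have a0_e : a0 <= twopi / 4 * e by rewrite !ge_min lexx !orbT.
have ea0 : twopi / 4 * e <= e * (twopi / 2 - a0).
  by rewrite (mulrC (twopi / 4)); apply: ler_wpM2l; lra.
near=> a; near=> k.
have close : forall t, a0 <= t <= twopi - a0 -> `|fine (Ks k t) - fine (K t)| < eta.
  by near: k; apply: Ks_cvg => //; lra.
have Kmid : fine (K (twopi / 2)) - eta < fine (Ks k (twopi / 2)).
  by have := close (twopi / 2) ltac:(apply/andP; split; lra); rewrite ltr_norml; lra.
have Ks_lt b : 0 < b < twopi -> (b < d) || (twopi - d < b) ->
    a0 <= b <= twopi - a0 -> fine (Ks k b) < c + eta.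
  move=> hb bd /close; rewrite ltr_norml => /andP[? ?].
  have hb0 : 0 <= b < twopi by apply/andP; split; lra.
  have /Kd : near_zero d b by rewrite /near_zero wrap_id.
  by rewrite (kernel_finE hK hb) lte_fin; lra.
have extrapolate b w : 0 < w < twopi -> 0 < b < twopi ->
    (w < b < twopi / 2) || (twopi / 2 < b < w) -> `|b - w| <= e * `|twopi / 2 - b| ->
    fine (Ks k b) < c + eta -> fine (Ks k w) <= c + 2 * eta.
  move=> hw hb hbw dist Kb.
  have := kernel_extrapolate (hKs k) hw mid hbw (ltW e0) dist (ltW Kb) (ltW Kmid).
  have : e * Num.max 0 (c + eta - (fine (K (twopi / 2)) - eta)) <= e * D.
    by apply: ler_wpM2l; [exact: ltW|rewrite ge_max D0].
  lra.
have interior w : 0 < w < twopi -> (w < a0) || (twopi - a0 < w) ->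
    fine (Ks k w) <= c + 2 * eta.
  move=> hw /orP[wa|wa].
  - apply: (extrapolate a0) => //; first (by apply/andP; split; lra).
    + by apply/orP; left; apply/andP; split; lra.
    + by rewrite !gtr0_norm; lra.
    + by apply: Ks_lt; [apply/andP; split|apply/orP; left|apply/andP; split]; lra.
  - apply: (extrapolate (twopi - a0)) => //; first (by apply/andP; split; lra).
    + by apply/orP; right; apply/andP; split; lra.
    + by rewrite !ltr0_norm; lra.
    + by apply: Ks_lt; [apply/andP; split|apply/orP; right|apply/andP; split]; lra.
have aa0 : a <= a0 by near: a; exact: nbhs_right_ltW.
move=> s /(near_zeroW aa0); rewrite -(kernel_wrap (hKs k) s) /near_zero.
have /andP[] := wrap_itv s; move: (wrap s) => w w0 wt near_w.
have [w_eq0|wn0] := eqVneq w 0.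
  have ha : 0 < a0 / 2 < twopi by apply/andP; split; lra.
  rewrite w_eq0; apply: le_trans (kernel0_le (hKs k) (a0 / 2)) _.
  by rewrite (kernel_finE (hKs k) ha) lee_fin interior //; apply/orP; left; lra.
have hw : 0 < w < twopi by rewrite lt_neqAle eq_sym wn0 w0.
by rewrite (kernel_finE (hKs k) hw) lee_fin interior.
Unshelve. all: by end_near.
Qed.

End KernelSequence.

Section KernelSum.
Variables (R : realType) (n : nat).
Implicit Types (x : 'I_n -> R) (t : R).

Definition xpt x (j : 'I_n.+1) : R := if unlift ord0 j is Some i then x i else 0.

Lemma FsumE (L : 'I_n.+1 -> R -> \bar R) x t :
  Fsum L x t = (\sum_(j < n.+1) L j (t - xpt x j)%R)%E.
Proof.
rewrite /Fsum big_ord_recl /xpt unlift_none subr0; congr (_ + _)%E.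
by apply: eq_bigr => i _; rewrite liftK.
Qed.

Variable L : 'I_n.+1 -> R -> \bar R.
Hypothesis hL : forall j, concave_kernel (L j).

Lemma Fsum_wrap x t : Fsum L x (wrap t) = Fsum L x t.
Proof.
rewrite !FsumE; apply: eq_bigr => j _.
by rewrite /wrap addrAC -mulNr -rmorphN kernel_periodicz.
Qed.

Lemma Fsum_le_mbar x t : (Fsum L x t <= mbar L x)%E.
Proof.
rewrite -Fsum_wrap; apply: ereal_sup_ubound; exists (wrap t) => //.
by rewrite /= in_itv /= wrap_itv.
Qed.

Lemma mbar_le_bound x : (mbar L x <= (\sum_j kernel_bound (L j))%:E)%E.
Proof.
apply: ge_ereal_sup => _ [t _ <-]; rewrite FsumE -sumEFin.
by apply: lee_sum => j _; exact: kernel_le_bound.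
Qed.

Let d0 : R := twopi / (2 * n.+2%:R).

(* Some shift keeps every argument of F at distance at least d0 from 2piZ, where
   concavity bounds each kernel below by its values at d0 and 2pi - d0. *)
Definition mbar_lb : R := \sum_j Num.min (fine (L j d0)) (fine (L j (twopi - d0))).

Lemma mbar_lb_le_mbar x : (mbar_lb%:E <= mbar L x)%E.
Proof.
have tp0 := twopi_gt0 R.
have n2 : 2 <= n.+2%:R :> R by rewrite ler_nat.
have d0_pos : 0 < d0 by rewrite divr_gt0 // mulr_gt0 //; lra.
have d0E : 2 * n.+2%:R * d0 = twopi by rewrite /d0; field; lra.
have d0_lt : d0 < twopi - d0.
  have : 2 * 2 * d0 <= 2 * n.+2%:R * d0 by rewrite ler_pM2r // ler_pM2l.
  lra.
have [i avoid] : exists i : 'I_n.+2, forall j, ~~ near_zero d0 (0 + 2 * i%:R * d0 - xpt x j).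
  by apply: shift_avoids_near_zero; rewrite ?d0E // ltW.
apply: le_trans (Fsum_le_mbar x (0 + 2 * i%:R * d0)).
rewrite FsumE /mbar_lb -sumEFin; apply: lee_sum => j _.
rewrite -(kernel_wrap (hL j) (_ - xpt x j)); have /not_near_zero := avoid j.
move: (wrap _) => w /andP[dw wd].
have hw : 0 < w < twopi by apply/andP; split; lra.
by rewrite (kernel_finE (hL j) hw) lee_fin kernel_min_between //; lra.
Qed.

Lemma mbar_fin_num x : mbar L x \is a fin_num.
Proof.
rewrite fin_numElt; apply/andP; split.
- exact: lt_le_trans (ltNyr _) (mbar_lb_le_mbar x).
- exact: le_lt_trans (mbar_le_bound x) (ltry _).
Qed.

End KernelSum.

Section ExtendedRealBounds.
Variable R : realType.
Implicit Types (r a b c e : R) (y : \bar R).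

Lemma lee_addr_of_lt r e c y : ((r - e)%:E < y + c%:E)%E -> (r%:E <= y + (c + e)%:E)%E.
Proof.
case: y => [y| |].
- by rewrite -!EFinD lte_fin lee_fin; lra.
- by move=> _; exact: leey.
- by rewrite addNye ltNge leNye.
Qed.

Lemma lte_dist_of_bounds r a b e y : a < e -> b < e ->
  (y <= r%:E + a%:E)%E -> (r%:E <= y + b%:E)%E -> (`|y - r%:E| < e%:E)%E.
Proof.
case: y => [y| |] ae be.
- rewrite -!EFinD !lee_fin => ya ry.
  by rewrite abse_EFin lte_fin ltr_norml; apply/andP; split; lra.
- by rewrite -EFinD leye_eq.
- by move=> _; rewrite addNye leeNy_eq.
Qed.

End ExtendedRealBounds.

Section Convergence.
Variables (R : realType) (n : nat).
Variables (K : 'I_n.+1 -> R -> \bar R) (Kk : nat -> 'I_n.+1 -> R -> \bar R).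
Hypotheses (hK : forall j, concave_kernel (K j))
           (hKk : forall k j, concave_kernel (Kk k j)).
Hypothesis Kk_cvg : forall j (a b : R), 0 < a -> b < twopi -> forall e : R, 0 < e ->
  \forall k \near \oo, forall t, a <= t <= b -> `|fine (Kk k j t) - fine (K j t)| < e.

Lemma Kk_cvg_all (a b e : R) : 0 < a -> b < twopi -> 0 < e ->
  \forall k \near \oo, forall j t, a <= t <= b -> `|fine (Kk k j t) - fine (K j t)| < e.
Proof. by move=> a0 b2pi e0; apply: filter_forall => j; exact: Kk_cvg. Qed.

Let U j : R := `|kernel_bound (K j)| + 1.
Let Usum : R := \sum_j U j.

Lemma K_le_U j s : (K j s <= (U j)%:E)%E.
Proof.
apply: le_trans (kernel_le_bound (hK j) s) _; rewrite lee_fin /U.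
by have := ler_norm (kernel_bound (K j)); lra.
Qed.

Lemma Kk_le_U : \forall k \near \oo, forall j s, (Kk k j s <= (U j)%:E)%E.
Proof.
have tp0 := twopi_gt0 R.
near=> k.
have close : forall j t, twopi / 4 <= t <= 3 * twopi / 4 ->
    `|fine (Kk k j t) - fine (K j t)| < 1 / 9.
  by near: k; apply: Kk_cvg_all; lra.
move=> j s; apply: le_trans (kernel_le_bound (hKk k j) s) _; rewrite lee_fin /U.
by have := kernel_bound_close (close j); have := ler_norm (kernel_bound (K j)); lra.
Unshelve. all: by end_near.
Qed.

Variable eta : R.
Hypotheses (eta_gt0 : 0 < eta) (eta_le1 : eta <= 1).

(* Near a pole (K j 0 = -oo) the kernel is pushed below this level, which makes
   F too small to compete with the maximum. *)
Let cap j : R := if K j 0 is r%:E then r + eta else mbar_lb K - 3 - Usum.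

Lemma K0_lt_cap j : (K j 0 < (cap j)%:E)%E.
Proof.
have [_ [_ [_ [K0 _]]]] := hK j; rewrite /cap.
by case: (K j 0) K0 => [r _|//|_] /=; [rewrite lte_fin ltrDl|exact: ltNyr].
Qed.

Lemma cap_le j s : K j 0 != -oo%E -> ((cap j)%:E <= K j s + eta%:E)%E.
Proof.
have [_ [_ [_ [K0 _]]]] := hK j; have := kernel0_le (hK j) s; rewrite /cap.
by case: (K j 0) K0 => [r _ Ks _|//|//]; rewrite EFinD; apply: leeD.
Qed.

Lemma cap_pole j : K j 0 = -oo%E -> cap j = mbar_lb K - 3 - Usum.
Proof. by rewrite /cap => ->. Qed.

Lemma Fsum_le_at_pole (L : 'I_n.+1 -> R -> \bar R) x t j :
  (forall i s, (L i s <= (U i)%:E)%E) -> K j 0 = -oo%E ->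
  (L j (t - xpt x j)%R <= (cap j + 2 * eta)%:E)%E ->
  (Fsum L x t <= (mbar_lb K - 1)%:E)%E.
Proof.
move=> LU Kj0 Lj; rewrite FsumE (bigD1 j) //=.
have rest : (\sum_(i | i != j) L i (t - xpt x i)%R <= (\sum_(i | i != j) U i)%:E)%E.
  by rewrite -sumEFin; apply: lee_sum => i _; exact: LU.
apply: le_trans (leeD Lj rest) _; rewrite -EFinD lee_fin.
suff : cap j + 2 * eta + \sum_(i | i != j) U i <= mbar_lb K - 1 by [].
have : \sum_(i | i != j) U i <= Usum.
  by rewrite /Usum [leRHS](bigD1 j) //=; apply: ler_wpDl; rewrite ?lexx // /U addr_ge0.
by have := eta_le1; rewrite cap_pole //; lra.
Qed.

Lemma Kk_near_zero_le : \forall a \near 0^'+, \forall k \near \oo,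
  forall j s, near_zero a s -> (Kk k j s <= (cap j + 2 * eta)%:E)%E.
Proof.
have near_j j := kernel_seq_near_zero_le (hK j) (hKk^~ j) (Kk_cvg j) (K0_lt_cap j) eta_gt0.
have near_all := filter_forall _ near_j.
near=> a.
have near_a : forall j, \forall k \near \oo,
    forall s, near_zero a s -> (Kk k j s <= (cap j + 2 * eta)%:E)%E.
  by near: a; exact: near_all.
by apply: filter_forall.
Unshelve. all: by end_near.
Qed.

Lemma mbar_Kk_le : \forall k \near \oo, forall x,
  (mbar (Kk k) x <= mbar K x + (n.+1%:R * (3 * eta))%:E)%E.
Proof.
have tp0 := twopi_gt0 R; have eta0 := eta_gt0.
near (0 : R)^'+ => a.
have a0 : 0 < a by near: a; exact: nbhs_right_gt.
near=> k => x.
have Kk_a : forall j s, near_zero a s -> (Kk k j s <= (cap j + 2 * eta)%:E)%E.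
  by near: k; near: a; exact: Kk_near_zero_le.
have Kk_U : forall j s, (Kk k j s <= (U j)%:E)%E by near: k; exact: Kk_le_U.
have close : forall j t, a <= t <= twopi - a -> `|fine (Kk k j t) - fine (K j t)| < eta.
  by near: k; apply: Kk_cvg_all; lra.
apply: ge_ereal_sup => _ [t _ <-].
have [[j /andP[/eqP Kj0 /(Kk_a j) Kkj]]|no_pole] :=
  pselect (exists j, (K j 0 == -oo%E) && near_zero a (t - xpt x j)).
  apply: le_trans (Fsum_le_at_pole Kk_U Kj0 Kkj) _.
  apply: le_trans (leeD (mbar_lb_le_mbar hK x) (lexx _)); rewrite -EFinD lee_fin.
  have : 0 <= n.+1%:R * (3 * eta) by apply: mulr_ge0; [exact: ler0n|lra].
  lra.
apply: le_trans (leeD (Fsum_le_mbar hK x t) (lexx _)).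
have -> : (n.+1%:R * (3 * eta))%:E = (\sum_(j < n.+1) (3 * eta)%:E)%E.
  by rewrite sumEFin sumr_const card_ord mulr_natl.
rewrite !FsumE -big_split /=; apply: lee_sum => j _.
have [nz|far] := boolP (near_zero a (t - xpt x j)).
  have Kj0 : K j 0 != -oo%E by apply/negP => Kj0; apply: no_pole; exists j; rewrite Kj0.
  apply: le_trans (Kk_a j _ nz) _.
  have -> : 3 * eta = eta + 2 * eta by ring.
  by rewrite !EFinD addeA; apply: leeD; [exact: cap_le|exact: lexx].
rewrite -(kernel_wrap (hK j)) -(kernel_wrap (hKk k j)).
have /not_near_zero := far; move: (wrap _) => w hw.
have hw' : 0 < w < twopi by case/andP: hw => ? ?; apply/andP; split; lra.
rewrite (kernel_finE (hK j) hw') (kernel_finE (hKk k j) hw') -EFinD lee_fin.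
by have := close j w hw; rewrite ltr_norml; lra.
Unshelve. all: by end_near.
Qed.

Lemma K_near_zero_lt :
  \forall d \near 0^'+, forall j s, near_zero d s -> (K j s < (cap j)%:E)%E.
Proof. by apply: filter_forall => j; exact: (kernel_near_zero_lt (hK j) (K0_lt_cap j)). Qed.

Lemma Fsum_shift_le : \forall m \near 0^'+, forall x t h,
  ((mbar_lb K - eta)%:E < Fsum K x t)%E -> 0 <= h <= m ->
  (Fsum K x t <= Fsum K x (t + h) + (n.+1%:R * eta)%:E)%E.
Proof.
have eta0 := eta_gt0; have eta1 := eta_le1.
near (0 : R)^'+ => d.
have Kd : forall j s, near_zero d s -> (K j s < (cap j)%:E)%E.
  by near: d; exact: K_near_zero_lt.
have d0 : 0 < d by near: d; exact: nbhs_right_gt.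
have shift := filter_forall _ (fun j => kernel_shift_le (hK j) d0 eta_gt0).
near=> m => x t h Ft hm.
have Kshift : forall j s h', ~~ near_zero d s -> 0 <= h' <= m ->
    (K j s <= K j (s + h') + eta%:E)%E.
  by near: m; exact: shift.
have -> : (n.+1%:R * eta)%:E = (\sum_(j < n.+1) eta%:E)%E.
  by rewrite sumEFin sumr_const card_ord mulr_natl.
rewrite !FsumE -big_split /=; apply: lee_sum => j _; rewrite addrAC.
have [nz|far] := boolP (near_zero d (t - xpt x j)); last exact: Kshift.
have Kj0 : K j 0 != -oo%E.
  apply/negP => /eqP Kj0; move: Ft; apply/negP; rewrite -leNgt.
  apply: le_trans (Fsum_le_at_pole K_le_U Kj0 _) _; last by rewrite lee_fin; lra.
  by apply: le_trans (ltW (Kd j _ nz)) _; rewrite lee_fin; lra.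
by apply: le_trans (ltW (Kd j _ nz)) _; exact: cap_le.
Unshelve. all: by end_near.
Qed.

Lemma mbar_le_Kk : \forall k \near \oo, forall x,
  (mbar K x <= mbar (Kk k) x + ((2 * n.+1%:R + 1) * eta)%:E)%E.
Proof.
have tp0 := twopi_gt0 R; have eta0 := eta_gt0.
near (0 : R)^'+ => m.
have shift : forall x t h, ((mbar_lb K - eta)%:E < Fsum K x t)%E -> 0 <= h <= m ->
    (Fsum K x t <= Fsum K x (t + h) + (n.+1%:R * eta)%:E)%E.
  by near: m; exact: Fsum_shift_le.
have m0 : 0 < m by near: m; exact: nbhs_right_gt.
have m_lt : m < twopi by near: m; exact: nbhs_right_lt tp0.
set p := m / (2 * n.+2%:R).
have n2 : 0 < n.+2%:R :> R by rewrite ltr0n.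
have p0 : 0 < p by rewrite divr_gt0 // mulr_gt0.
have pE : 2 * n.+2%:R * p = m by rewrite /p; field; lra.
near=> k => x.
have close : forall j t, p <= t <= twopi - p -> `|fine (Kk k j t) - fine (K j t)| < eta.
  by near: k; apply: Kk_cvg_all; lra.
have fin := mbar_fin_num hK x.
have lb_r : mbar_lb K <= fine (mbar K x) by rewrite -lee_fin fineK // mbar_lb_le_mbar.
have : ((fine (mbar K x) - eta)%:E < mbar K x)%E.
  by rewrite -[X in (_ < X)%E](fineK fin) lte_fin; lra.
case/ereal_sup_gt => _ [t0 _ <-] Ft0.
have [i avoid] : exists i : 'I_n.+2, forall j,
    ~~ near_zero p (t0 + 2 * i%:R * p - xpt x j).
  by apply: shift_avoids_near_zero; rewrite ?pE ltW.
set h := 2 * i%:R * p in avoid.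
have hm : 0 <= h <= m.
  have i_le : i%:R <= n.+1%:R :> R by rewrite ler_nat -ltnS ltn_ord.
  have i_ge0 : 0 <= i%:R :> R by rewrite ler0n.
  rewrite -pE /h -natr1; apply/andP; split; nra.
have Ft0_lb : ((mbar_lb K - eta)%:E < Fsum K x t0)%E.
  by apply: le_lt_trans Ft0; rewrite lee_fin; lra.
have S1 := shift x t0 h Ft0_lb hm.
have S2 : (Fsum K x (t0 + h) <= Fsum (Kk k) x (t0 + h) + (n.+1%:R * eta)%:E)%E.
  have -> : (n.+1%:R * eta)%:E = (\sum_(j < n.+1) eta%:E)%E.
    by rewrite sumEFin sumr_const card_ord mulr_natl.
  rewrite !FsumE -big_split /=; apply: lee_sum => j _.
  rewrite -(kernel_wrap (hK j)) -(kernel_wrap (hKk k j)).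
  have /not_near_zero := avoid j; move: (wrap _) => w hw.
  have hw' : 0 < w < twopi by case/andP: hw => ? ?; apply/andP; split; lra.
  rewrite (kernel_finE (hK j) hw') (kernel_finE (hKk k j) hw') -EFinD lee_fin.
  by have := close j w hw; rewrite ltr_norml; lra.
have S3 := Fsum_le_mbar (hKk k) x (t0 + h).
rewrite -[X in (X <= _)%E](fineK fin) mulrDl mul1r; apply: lee_addr_of_lt.
apply: (lt_le_trans Ft0); apply: (le_trans S1).
apply: le_trans (leeD S2 (lexx _)) _; rewrite -addeA -EFinD.
by apply: leeD => //; rewrite lee_fin; lra.
Unshelve. all: by end_near.
Qed.

Lemma mbar_Kk_close : \forall k \near \oo, forall x,
  (`| mbar (Kk k) x - mbar K x | < (4 * n.+1%:R * eta)%:E)%E.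
Proof.
have eta0 := eta_gt0.
have eta_le : eta <= n.+1%:R * eta by apply: ler_peMl; [exact: ltW|rewrite ler1n].
near=> k.
have up : forall x, (mbar (Kk k) x <= mbar K x + (n.+1%:R * (3 * eta))%:E)%E.
  by near: k; exact: mbar_Kk_le.
have down : forall x,
    (mbar K x <= mbar (Kk k) x + ((2 * n.+1%:R + 1) * eta)%:E)%E.
  by near: k; exact: mbar_le_Kk.
move=> x; move: (up x) (down x); rewrite -(fineK (mbar_fin_num hK x)) => ub lb.
by apply: (lte_dist_of_bounds _ _ ub lb); lra.
Unshelve. all: by end_near.
Qed.

End Convergence.

Theorem theorem4p7 (R : realType) (n : nat)
  (K : 'I_n.+1 -> R -> \bar R) (Kk : nat -> 'I_n.+1 -> R -> \bar R) :
  (forall j, concave_kernel (K j)) ->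
  (forall k j, concave_kernel (Kk k j)) ->
  (* maximum points avoid all the x_j, j = 0..n (with x_0 = 0) *)
  (forall (x : 'I_n -> R) (z : R), in_torus_n x -> 0 <= z < 2 * pi ->
     Fsum K x z = mbar K x -> z != 0 /\ forall j, z != x j) ->
  (* K_j^(k) -> K_j locally uniformly on (0, 2pi) *)
  (forall j (a b : R), 0 < a -> b < 2 * pi -> forall eps : R, 0 < eps ->
     exists N : nat, forall k, (N <= k)%N -> forall t, a <= t <= b ->
       `| fine (Kk k j t) - fine (K j t) | < eps) ->
  (* mbar^(k) -> mbar uniformly on T^n *)
  forall eps : R, 0 < eps ->
    exists N : nat, forall k, (N <= k)%N -> forall x : 'I_n -> R, in_torus_n x ->
      (`| mbar (Kk k) x - mbar K x | < eps%:E)%E.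
Proof.
move=> hK hKk _ hconv eps eps0.
have Kk_cvg j (a b : R) : 0 < a -> b < twopi -> forall e : R, 0 < e ->
    \forall k \near \oo, forall t, a <= t <= b -> `|fine (Kk k j t) - fine (K j t)| < e.
  by move=> a0 b2pi e e0; have [N HN] := hconv j a b a0 b2pi e e0; exists N.
have n1 : 0 < 4 * n.+1%:R :> R by rewrite mulr_gt0 ?ltr0n.
set eta := Num.min 1 (eps / (4 * n.+1%:R)).
have eta0 : 0 < eta by rewrite lt_min ltr01 /= divr_gt0.
have eta1 : eta <= 1 by rewrite ge_min lexx.
have eta_eps : 4 * n.+1%:R * eta <= eps.
  by rewrite mulrC -ler_pdivlMr // ge_min lexx orbT.
have [N _ close] := mbar_Kk_close hK hKk Kk_cvg eta0 eta1.
exists N => k /close close_k x _.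
by apply: lt_le_trans (close_k x) _; rewrite lee_fin.
Qed.
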